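(* Let $c\in\mathbb{R}$ with $c>0$ and $h:\mathbb{N}\to(0,\infty]$ with $0<h(n)<\infty$ for all $n\in\mathbb{N}$. Consider the recurrence $$T(1)=c,\qquad T(n)=T(n-1)+h(n)\ \text{ for } n\ge2.$$ Then it has a unique solution $f_T\in\mathcal{RT}_c$. Moreover, if there exists $g\in\mathcal{RT}_c$ such that $\Gamma_T$ is an improver with respect to $g$, then $f_T\in\mathcal{O}(g)$.
   Context: $\mathbb{N}$ is the set of positive integers, $\omega$ the nonnegative integers. $\mathcal{RT}$ is the set of functions $\mathbb{N}\to(0,\infty]$ and $\mathcal{RT}_c=\{f\in\mathcal{RT}: f(1)=c\}$. $\Gamma_T:\mathcal{RT}_c\to\mathcal{RT}_c$ is defined by $\Gamma_T(f)(1)=c$ and $\Gamma_T(f)(n)=f(n-1)+h(n)$ for $n\ge2$. A functional $\Phi:C\to C$ ($C\subseteq\mathcal{RT}$) is an improver with respect to $f\in C$ if $\Phi^{n+1}(f)\le\Phi^n(f)$ pointwise for all $n\in\omega$ (with $\Phi^0(f)=f$). $f\in\mathcal{O}(g)$ means there exist $n_0\in\mathbb{N}$ and $C\ge0$ with $f(n)\le Cg(n)$ for all $n\ge n_0$. *)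

From Stdlib Require Import Reals Lra Lia.
From Coquelicot Require Import Coquelicot.
Open Scope R_scope.

(* Functions N -> (0, +oo] are modelled as nat -> Rbar; only arguments n >= 1
   matter (value at 0 is ignored everywhere). *)
Definition inRT (f : nat -> Rbar) : Prop :=
  forall n : nat, (1 <= n)%nat -> Rbar_lt (Finite 0) (f n).

Definition inRTc (c : R) (f : nat -> Rbar) : Prop :=
  inRT f /\ f 1%nat = Finite c.

Definition GammaT (c : R) (h : nat -> Rbar) (f : nat -> Rbar) : nat -> Rbar :=
  fun n => if (n <=? 1)%nat then Finite c else Rbar_plus (f (n - 1)%nat) (h n).

Definition solves_rec (c : R) (h : nat -> Rbar) (f : nat -> Rbar) : Prop :=
  f 1%nat = Finite c /\
  forall n : nat, (2 <= n)%nat -> f n = Rbar_plus (f (n - 1)%nat) (h n).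

Definition RT_le (f g : nat -> Rbar) : Prop :=
  forall n : nat, (1 <= n)%nat -> Rbar_le (f n) (g n).

Definition improver (Phi : (nat -> Rbar) -> (nat -> Rbar)) (f : nat -> Rbar) : Prop :=
  forall k : nat, RT_le (Nat.iter (S k) Phi f) (Nat.iter k Phi f).

Definition bigO (f g : nat -> Rbar) : Prop :=
  exists (n0 : nat) (C : R), (1 <= n0)%nat /\ 0 <= C /\
    forall n : nat, (n0 <= n)%nat -> Rbar_le (f n) (Rbar_mult (Finite C) (g n)).

From Stdlib Require Import Reals Lra Lia.
From Coquelicot Require Import Coquelicot.
Open Scope R_scope.

(* The recurrence is solved by summing h from 2 to n on top of c.  Starting from
   any g with g(1) = c, the k-th Gamma_T-iterate already agrees with that
   solution on 1..k+1, since each application fixes one more value.  If Gamma_T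
   improves g, every iterate lies below g, so the solution itself lies below g:
   it is in O(g) with constant 1. *)

Fixpoint rec_sum (c : R) (h : nat -> Rbar) (n : nat) : R :=
  match n with
  | O | S O => c
  | S (S _ as k) => rec_sum c h k + real (h (S k))
  end.

Lemma Rbar_finite_real (x : Rbar) :
  Rbar_lt (Finite 0) x -> Rbar_lt x p_infty -> x = Finite (real x) /\ 0 < real x.
Proof. destruct x; simpl; tauto. Qed.

Lemma Rbar_mult_1_l (x : Rbar) : Rbar_mult (Finite 1) x = x.
Proof.
  destruct x as [r| |]; simpl; [f_equal; ring | |];
    unfold Rbar_mult; simpl; destruct (Rle_dec 0 1); try lra;
    destruct (Rle_lt_or_eq_dec 0 1 r); try lra; reflexivity.
Qed.

Section PositiveIncrements.

Variables (c : R) (h : nat -> Rbar).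
Hypothesis c_gt0 : 0 < c.
Hypothesis h_fin_pos : forall n : nat, (1 <= n)%nat ->
  Rbar_lt (Finite 0) (h n) /\ Rbar_lt (h n) p_infty.

Lemma h_finite_real n : (1 <= n)%nat -> h n = Finite (real (h n)) /\ 0 < real (h n).
Proof. intros n_ge1. apply Rbar_finite_real; apply h_fin_pos; exact n_ge1. Qed.

Lemma rec_sum_ge n : c <= rec_sum c h n.
Proof.
  induction n as [|[|n] IH]; simpl; try lra.
  destruct (h_finite_real (S (S n))) as [_ h_pos]; [lia|].
  simpl in IH. lra.
Qed.

Lemma rec_sum_inRTc : inRTc c (fun n => Finite (rec_sum c h n)).
Proof.
  split; [|reflexivity].
  intros n _. simpl. pose proof (rec_sum_ge n). lra.
Qed.

Lemma rec_sum_solves_rec : solves_rec c h (fun n => Finite (rec_sum c h n)).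
Proof.
  split; [reflexivity|].
  intros [|[|n]] n_ge2; try lia.
  destruct (h_finite_real (S (S n))) as [h_eq _]; [lia|].
  rewrite h_eq. reflexivity.
Qed.

End PositiveIncrements.

Lemma solves_rec_unique c h f g :
  solves_rec c h f -> solves_rec c h g ->
  forall n : nat, (1 <= n)%nat -> f n = g n.
Proof.
  intros [f1 f_rec] [g1 g_rec].
  induction n as [|[|n] IH]; intros n_ge1; [lia | rewrite f1, g1; reflexivity |].
  rewrite f_rec, g_rec by lia.
  replace (S (S n) - 1)%nat with (S n) by lia. rewrite IH by lia. reflexivity.
Qed.

Lemma improver_iter_le (Phi : (nat -> Rbar) -> nat -> Rbar) g k :
  improver Phi g -> RT_le (Nat.iter k Phi g) g.
Proof.
  intros improves. induction k as [|k IH]; intros n n_ge1.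
  - apply Rbar_le_refl.
  - eapply Rbar_le_trans; [apply improves | apply IH]; exact n_ge1.
Qed.

Lemma iter_GammaT_solves_rec c h f g k :
  g 1%nat = Finite c -> solves_rec c h f ->
  forall n : nat, (1 <= n <= S k)%nat -> Nat.iter k (GammaT c h) g n = f n.
Proof.
  intros g1 [f1 f_rec]. induction k as [|k IH]; intros n n_range.
  - replace n with 1%nat by lia. simpl. rewrite g1, f1. reflexivity.
  - simpl. unfold GammaT at 1. destruct (Nat.leb_spec n 1) as [n_le1 | n_gt1].
    + replace n with 1%nat by lia. rewrite f1. reflexivity.
    + rewrite f_rec by lia. rewrite IH by lia. reflexivity.
Qed.

Lemma improver_solves_rec_le c h f g :
  g 1%nat = Finite c -> improver (GammaT c h) g -> solves_rec c h f -> RT_le f g.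
Proof.
  intros g1 improves f_sol n n_ge1.
  rewrite <- (iter_GammaT_solves_rec c h f g n g1 f_sol n) by lia.
  apply improver_iter_le; assumption.
Qed.

Lemma RT_le_bigO f g : RT_le f g -> bigO f g.
Proof.
  intros le_fg. exists 1%nat, 1. split; [lia | split; [lra |]].
  intros n n_ge1. rewrite Rbar_mult_1_l. apply le_fg. exact n_ge1.
Qed.

Theorem corollary12 (c : R) (h : nat -> Rbar) :
  0 < c ->
  (forall n : nat, (1 <= n)%nat ->
     Rbar_lt (Finite 0) (h n) /\ Rbar_lt (h n) p_infty) ->
  exists fT : nat -> Rbar,
    inRTc c fT /\ solves_rec c h fT /\
    (forall f : nat -> Rbar, inRTc c f -> solves_rec c h f ->
       forall n : nat, (1 <= n)%nat -> f n = fT n) /\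
    (forall g : nat -> Rbar, inRTc c g -> improver (GammaT c h) g -> bigO fT g).
Proof.
  intros c_gt0 h_fin_pos.
  pose proof (rec_sum_solves_rec c h h_fin_pos) as fT_sol.
  exists (fun n => Finite (rec_sum c h n)).
  split; [apply rec_sum_inRTc; assumption |].
  split; [exact fT_sol |].
  split.
  - intros f _ f_sol. exact (solves_rec_unique c h _ _ f_sol fT_sol).
  - intros g [_ g1] improves.
    apply RT_le_bigO, (improver_solves_rec_le c h _ g g1 improves fT_sol).
Qed.
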